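(* Let $\mathfrak g$ be of type $A_n$ and $\lambda=\sum_{i=1}^n r_i\omega_i\in P^+$. Define $\lambda^1,\lambda^2$ as follows: if all $r_i$ are even, $\lambda^1=\lambda^2=\lambda/2$... more precisely $\lambda^1=\lambda^2=\sum_i (r_i/2)\omega_i$; otherwise let $i_0<i_1<\dots<i_p$ be the indices $i$ with $r_i$ odd, $I_+=I\setminus\{i_0,\dots,i_p\}$, and set $$\lambda^1=\sum_{s=0}^p\frac{r_{i_s}+(-1)^s}{2}\,\omega_{i_s}+\sum_{i\in I_+}\frac{r_i}{2}\,\omega_i,\qquad\lambda^2=\lambda-\lambda^1.$$ Let $\boldsymbol\lambda_{\max}=(\lambda^1,\lambda^2)\in P^+(\lambda,2)$. Then either $\lambda^1=\lambda^2$ or $\lambda^2=\lambda^1-w^{-1}\omega_i$ for some $w\in W$ and $i\in I$. In either case $\boldsymbol\lambda_{\max}$ is the unique maximal element of $P^+(\lambda,2)/\!\sim$: every $\boldsymbol\mu\in P^+(\lambda,2)$ satisfies $\boldsymbol\mu\preceq\boldsymbol\lambda_{\max}$.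
   Context: $\mathfrak g=\mathfrak{sl}_{n+1}$ with simple roots indexed by $I=\{1,\dots,n\}$, fundamental weights $\omega_i$, positive roots $R^+$, coroots $h_\alpha$, Weyl group $W$, dominant integral weights $P^+$. $P^+(\lambda,2)=\{(\lambda_1,\lambda_2)\in(P^+)^2:\lambda_1+\lambda_2=\lambda\}$; $(\lambda_1,\lambda_2)\preceq(\mu_1,\mu_2)$ means $\min\{\lambda_1(h_\alpha),\lambda_2(h_\alpha)\}\le\min\{\mu_1(h_\alpha),\mu_2(h_\alpha)\}$ for all $\alpha\in R^+$; $\sim$ means equality of these minima for all $\alpha$. *)

(* Type A_n, g = sl_{n+1}, simple roots indexed by 'I_n
   (index k : 'I_n stands for the paper's index k+1). *)
From HB Require Import structures.
From mathcomp Require Import all_boot all_order all_algebra.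
Set Implicit Arguments. Unset Strict Implicit. Unset Printing Implicit Defensive.
Import Order.TTheory GRing.Theory Num.Theory.
Local Open Scope ring_scope.

(* Integral weights, in coordinates w.r.t. the fundamental weights:
   mu = \sum_k mu k * omega_k. *)
Definition weight (n : nat) := {ffun 'I_n -> int}.

Definition omega n (i : 'I_n) : weight n := [ffun k => ((k == i) : nat)%:Z].

Definition dominant n (mu : weight n) : bool := [forall k, 0 <= mu k].

Definition addw n (a b : weight n) : weight n := [ffun k => a k + b k].
Definition subw n (a b : weight n) : weight n := [ffun k => a k - b k].

(* Simple root alpha_j in fundamental-weight coordinates (column j of the
   Cartan matrix of A_n): 2 omega_j - omega_{j-1} - omega_{j+1}. *)
Definition alpha n (j : 'I_n) : weight n :=
  [ffun k => if k == j then 2%:Z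
             else if (k.+1 == j :> nat) || (j.+1 == k :> nat) then -1 else 0].

(* Simple reflection s_j mu = mu - mu(h_j) alpha_j ; mu(h_j) = mu j. *)
Definition sref n (j : 'I_n) (mu : weight n) : weight n :=
  [ffun k => mu k - mu j * alpha j k].

(* An element w of the Weyl group W is a word [:: j1; ...; jm] in the simple
   reflections, w = s_{j1} ... s_{jm}; its action on weights: *)
Definition weyl_act n (w : seq 'I_n) (mu : weight n) : weight n :=
  foldr (@sref n) mu w.
Definition weyl_act_inv n (w : seq 'I_n) (mu : weight n) : weight n :=
  weyl_act (rev w) mu.

(* Positive roots of A_n: alpha_{i,j} = alpha_i + ... + alpha_j, i <= j, with
   coroot h_{alpha_{i,j}} = h_i + ... + h_j, so mu(h_alpha) = sum_{i<=k<=j} mu k. *)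
Definition hpair n (mu : weight n) (i j : 'I_n) : int :=
  \sum_(k < n | (i <= k <= j)%N) mu k.

Definition inP2 n (lam : weight n) (p : weight n * weight n) : bool :=
  [&& dominant p.1, dominant p.2 & addw p.1 p.2 == lam].

Definition preceq n (l m : weight n * weight n) : Prop :=
  forall i j : 'I_n, (i <= j)%N ->
    Num.min (hpair l.1 i j) (hpair l.2 i j) <= Num.min (hpair m.1 i j) (hpair m.2 i j).

Definition lam_of n (r : 'I_n -> nat) : weight n := [ffun k => (r k)%:Z].

(* For i with r_i odd, its position s in the increasing list i_0 < ... < i_p
   of odd indices = number of odd indices below i. *)
Definition odd_rank n (r : 'I_n -> nat) (i : 'I_n) : nat :=
  #|[set k : 'I_n | odd (r k) & (k < i)%N]|.

(* lambda^1: (r_{i_s} + (-1)^s)/2 on odd indices, r_i/2 on the others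
   (this also covers the case where all r_i are even). *)
Definition lam1 n (r : 'I_n -> nat) : weight n :=
  [ffun i => if odd (r i) then (((r i)%:Z + (-1) ^+ odd_rank r i) %/ 2)%Z
             else ((r i)%:Z %/ 2)%Z].

Definition lam2 n (r : 'I_n -> nat) : weight n := subw (lam_of r) (lam1 r).

From HB Require Import structures.
From mathcomp Require Import all_boot all_order all_algebra zify ring.
Set Implicit Arguments. Unset Strict Implicit. Unset Printing Implicit Defensive.
Import Order.TTheory GRing.Theory Num.Theory.
Local Open Scope ring_scope.

(* Everything is read through partial sums: for a weight d let
   psum d m = d_0 + ... + d_(m-1), so that d(h_alpha) for the positive root
   alpha = alpha_i + ... + alpha_j is psum d (j+1) - psum d i.

   1. The difference D = lam1 - lam2 has coordinates
      D_k = [r_k odd] (-1)^(number of odd r below k), so its partial sums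
      psum D m = [the number of odd r_k with k < m is odd] lie in {0,1}.
   2. Weights whose partial sums all lie in {0,1} ("binary" weights) are,
      when nonzero, W-conjugates of a fundamental weight: a coordinate -1 can
      be flipped to +1 by the simple reflection at that index, which keeps the
      weight binary and strictly decreases a nonnegative potential; a binary
      weight without coordinate -1 is some omega_i.  This gives the
      dichotomy lam1 = lam2 or lam2 = lam1 - w^-1 omega_i.
   3. Consequently |lam1(h_alpha) - lam2(h_alpha)| <= 1 for every positive
      root, i.e. the pair (lam1, lam2) splits lambda(h_alpha) as evenly as
      possible, and an elementary inequality on integers shows that the
      minimum of any other splitting is not larger: this is maximality. *)

Section PartialSums.
Variable n : nat.
Implicit Types (d a b : weight n).

Definition psum d (m : nat) : int := \sum_(k < n | (k < m)%N) d k.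

Lemma psum0 d : psum d 0 = 0.
Proof. by apply: big1 => k; rewrite ltn0. Qed.

Lemma psumS d (k : 'I_n) : psum d k.+1 = psum d k + d k.
Proof.
rewrite /psum (bigD1 k) ?ltnSn //= addrC; congr (_ + _).
by apply: eq_bigl => i; rewrite ltnS ltn_neqAle andbC.
Qed.

Lemma psum_homo d : (forall k, 0 <= d k) ->
  {homo psum d : p q / (p <= q)%N >-> p <= q}.
Proof.
move=> d_ge0 p q le_pq.
rewrite /psum [X in _ <= X](bigID (fun k : 'I_n => (k < p)%N)) /=.
have -> : \sum_(k < n | (k < q)%N && (k < p)%N) d k = psum d p.
  by apply: eq_bigl => k; apply/idP/idP; lia.
by rewrite lerDl sumr_ge0.
Qed.

Lemma hpair_psum d (i j : 'I_n) : (i <= j)%N ->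
  hpair d i j = psum d j.+1 - psum d i.
Proof.
move=> le_ij; rewrite /psum (bigID (fun k : 'I_n => (k < i)%N)) /=.
have -> : \sum_(k < n | (k < j.+1)%N && (k < i)%N) d k = psum d i.
  by apply: eq_bigl => k; apply/idP/idP; lia.
by rewrite addrC addrK /hpair; apply: eq_bigl => k; apply/idP/idP; lia.
Qed.

Lemma hpairB a b (i j : 'I_n) : hpair (subw a b) i j = hpair a i j - hpair b i j.
Proof. by rewrite /hpair -sumrB; apply: eq_bigr => k _; rewrite ffunE. Qed.

Lemma hpairD a b (i j : 'I_n) : hpair (addw a b) i j = hpair a i j + hpair b i j.
Proof. by rewrite /hpair -big_split; apply: eq_bigr => k _; rewrite ffunE. Qed.

Lemma psum_alpha (j : 'I_n) m : (0 < j)%N -> (m <= n)%N ->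
  psum (alpha j) m = (m == j.+1)%:Z - (m == j)%:Z.
Proof.
move=> j_gt0; elim: m => [|m IH] m_le; first by rewrite psum0; lia.
rewrite (psumS _ (Ordinal m_le)) IH ?(ltnW m_le) // ffunE -val_eqE /=.
by repeat case: ifP; lia.
Qed.

Lemma psum_sref (j : 'I_n) d m : psum (sref j d) m = psum d m - d j * psum (alpha j) m.
Proof. by rewrite /psum mulr_sumr -sumrB; apply: eq_bigr => k _; rewrite ffunE. Qed.

Lemma sref_involutive (j : 'I_n) : involutive (@sref n j).
Proof. by move=> d; apply/ffunP => k; rewrite /sref /alpha !ffunE eqxx; ring. Qed.

Definition binary_psums d : Prop := forall m, (m <= n)%N -> 0 <= psum d m <= 1.

(* A potential which the reflections used below decrease by one. *)
Definition potential d : int := \sum_(m < n.+1) (n - m)%:Z * psum d m.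

Lemma potential_ge0 d : binary_psums d -> 0 <= potential d.
Proof.
move=> d_bin; apply: sumr_ge0 => m _; apply: mulr_ge0 => //.
by case/andP: (d_bin m (ltn_ord m)).
Qed.

Lemma weighted_indicator (k : nat) : (k <= n)%N ->
  \sum_(m < n.+1) (n - m)%:Z * (m == k :> nat)%:Z = (n - k)%:Z.
Proof.
move=> le_kn; rewrite (bigD1 (Ordinal (le_kn : (k < n.+1)%N))) //= eqxx mulr1.
rewrite big1 ?addr0 // => m ne_mk.
rewrite (_ : (m == k :> nat) = false) ?mulr0 //.
by apply: contraNF ne_mk => mk; apply/eqP/val_inj/eqP.
Qed.

(* Reflecting a binary weight at a coordinate equal to -1 swaps the partial
   sums at j and j+1 (which are 1 and 0): the result is again binary, has
   coordinate +1 at j, and its potential has dropped by one. *)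
Lemma sref_neg_coord d (j : 'I_n) : binary_psums d -> d j = -1 ->
  [/\ binary_psums (sref j d), potential (sref j d) = potential d - 1
    & sref j d j = 1].
Proof.
move=> d_bin dj.
have psum_j : psum d j = 1 /\ psum d j.+1 = 0.
  have := d_bin _ (ltnW (ltn_ord j)); have := d_bin _ (ltn_ord j).
  by rewrite psumS dj; lia.
have j_gt0 : (0 < j)%N.
  by case: psum_j => + _; case: (posnP j) => // ->; rewrite psum0.
have psum_swap m : (m <= n)%N ->
    psum (sref j d) m = psum d m + ((m == j.+1)%:Z - (m == j)%:Z).
  by move=> le_mn; rewrite psum_sref dj psum_alpha //; ring.
split.
- move=> m le_mn; rewrite psum_swap //; have := d_bin m le_mn.
  by case: psum_j; repeat case: eqP => [->|]; lia.
- rewrite /potential.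
  under eq_bigr => m _ do rewrite (psum_swap _ (ltn_ord m)) mulrDr mulrBr.
  rewrite big_split sumrB /= (@weighted_indicator j.+1 (ltn_ord j)).
  rewrite (@weighted_indicator j (ltnW (ltn_ord j))); congr (_ + _).
  by have := ltn_ord j; lia.
- by rewrite /sref ffunE /alpha ffunE eqxx dj; ring.
Qed.

(* A nonzero binary weight without coordinate -1 is a fundamental weight:
   its partial sums are 0 up to some k and 1 afterwards. *)
Lemma binary_psums_omega d (k : 'I_n) : binary_psums d ->
  (forall j, d j != -1) -> d k != 0 -> d = omega k.
Proof.
move=> d_bin d_neq dk.
have coord j : d j = psum d j.+1 - psum d j by rewrite psumS; ring.
have bounds j := (d_bin _ (ltnW (ltn_ord j)), d_bin _ (ltn_ord j)).
have d_ge0 j : 0 <= d j.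
  by have [] := bounds j; have := d_neq j; rewrite coord => /eqP; lia.
have mono := psum_homo d_ge0.
have psum_k : psum d k = 0 /\ psum d k.+1 = 1.
  by have [] := bounds k; have := d_ge0 k; move: dk; rewrite coord => /eqP; lia.
apply/ffunP => m; rewrite ffunE -val_eqE /= coord.
have [] := bounds m; case: (ltngtP m k) => [lt_mk|lt_km|/val_inj->]; last by lia.
- by have := mono _ _ lt_mk; have := mono _ _ (leqnSn m); lia.
- by have := mono _ _ lt_km; have := mono _ _ (leqnSn m); lia.
Qed.

Lemma binary_psums_orbit d : binary_psums d -> (exists k, d k != 0) ->
  exists u i, weyl_act u (omega i) = d.
Proof.
move=> d_bin d_nz; have [N] := ubnP (absz (potential d)).
elim: N d d_bin d_nz => // N IH d d_bin [k dk] lt_pot.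
case: (pickP (fun j => d j == -1)) => [j /eqP dj | d_neq]; last first.
  by exists [::], k; rewrite (binary_psums_omega d_bin _ dk) // => j; rewrite d_neq.
have [sd_bin sd_pot sdj] := sref_neg_coord d_bin dj.
have [u [i sd_orbit]] : exists u i, weyl_act u (omega i) = sref j d.
  apply: IH => //; first by exists j; rewrite sdj.
  by have := potential_ge0 d_bin; have := potential_ge0 sd_bin; lia.
by exists (j :: u), i; rewrite /= sd_orbit sref_involutive.
Qed.

End PartialSums.

Section LambdaMax.
Variables (n : nat) (r : 'I_n -> nat).

Definition odd_count (m : nat) : nat := #|[set k : 'I_n | odd (r k) & (k < m)%N]|.

Lemma odd_countS (k : 'I_n) : odd_count k.+1 = (odd_count k + odd (r k))%N.
Proof.
rewrite /odd_count; case r_odd: (odd (r k)); last first.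
  by rewrite addn0; apply: eq_card => x; rewrite !inE ltnS leq_eqVlt val_eqE;
     case: eqVneq => [->|]; rewrite ?r_odd.
have -> : [set x : 'I_n | odd (r x) & (x < k.+1)%N] =
          k |: [set x : 'I_n | odd (r x) & (x < k)%N].
  by apply/setP => x; rewrite !inE ltnS leq_eqVlt val_eqE; case: eqVneq => [->|]; rewrite ?r_odd.
by rewrite cardsU1 inE ltnn andbF addnC.
Qed.

(* Doubling removes the integer division in the definition of lam1:
   2 lam1_k = r_k + (-1)^(odd_count k) when r_k is odd, r_k otherwise. *)
Lemma lam1_double k :
  2 * lam1 r k = (r k)%:Z + (odd (r k))%:Z * (-1) ^+ odd_count k.
Proof.
rewrite ffunE -signr_odd -/(odd_rank r k); have := odd_double_half (r k).
by case: (odd (r k)); case: (odd (odd_rank r k)); rewrite /= ?expr0 ?expr1; lia.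
Qed.

Lemma lam2E k : lam2 r k = (r k)%:Z - lam1 r k.
Proof. by rewrite !ffunE. Qed.

(* The difference lam1 - lam2; its nonzero coordinates alternate in sign. *)
Definition lam_diff : weight n := subw (lam1 r) (lam2 r).

Lemma lam_diffE k : lam_diff k = (odd (r k))%:Z * (-1) ^+ odd_count k.
Proof. by have := lam1_double k; rewrite [lam_diff k]ffunE lam2E; lia. Qed.

Lemma psum_lam_diff m : (m <= n)%N -> psum lam_diff m = (odd (odd_count m))%:Z.
Proof.
elim: m => [|m IH] le_mn.
  rewrite psum0 /odd_count (_ : #|_| = 0%N) //.
  by apply: eq_card0 => x; rewrite inE ltn0 andbF.
rewrite (psumS _ (Ordinal le_mn)) IH ?(ltnW le_mn) // lam_diffE.
rewrite -[m.+1]/(Ordinal le_mn).+1 odd_countS -signr_odd /= oddD.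
by case: (odd (r _)); case: (odd (odd_count m)); rewrite /= ?expr0 ?expr1; lia.
Qed.

Lemma lam_diff_binary : binary_psums lam_diff.
Proof. by move=> m le_mn; rewrite psum_lam_diff //; case: (odd _). Qed.

Lemma lam_diff_hpair (i j : 'I_n) : (i <= j)%N -> -1 <= hpair lam_diff i j <= 1.
Proof.
move=> le_ij; rewrite hpair_psum // !psum_lam_diff ?(ltnW (ltn_ord i)) //.
by case: (odd _); case: (odd _).
Qed.

(* Both halves are dominant: an odd r_k is at least 1. *)
Lemma lam12_ge0 k : 0 <= lam1 r k /\ 0 <= lam2 r k.
Proof.
have := lam1_double k; rewrite lam2E -signr_odd.
case r_odd: (odd (r k)); last by rewrite mul0r addr0; lia.
by have := odd_gt0 r_odd; case: (odd _); rewrite /= ?expr0 ?expr1; lia.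
Qed.

Lemma lam_max_dichotomy :
  lam1 r = lam2 r \/
  exists (w : seq 'I_n) (i : 'I_n), lam2 r = subw (lam1 r) (weyl_act_inv w (omega i)).
Proof.
case: (pickP (fun k => lam_diff k != 0)) => [k dk | d_zero]; [right | left].
  have [u [i orbit]] := binary_psums_orbit lam_diff_binary (ex_intro _ k dk).
  exists (rev u), i; rewrite /weyl_act_inv revK orbit.
  by apply/ffunP => x; rewrite !ffunE; ring.
apply/ffunP => k; apply/eqP; rewrite -subr_eq0.
by have := d_zero k; rewrite ffunE => /negbFE.
Qed.

Lemma lam_max_inP2 : inP2 (lam_of r) (lam1 r, lam2 r).
Proof.
apply/and3P; split; try by apply/forallP => k; case: (lam12_ge0 k).
by apply/eqP/ffunP => k; rewrite !ffunE; ring.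
Qed.

End LambdaMax.

Lemma min_balanced_split (a b c e : int) :
  c + e = a + b -> -1 <= a - b <= 1 -> Num.min c e <= Num.min a b.
Proof. by move=> sum_eq diff_le; rewrite le_min !ge_min; apply/andP; split; apply/orP; lia. Qed.

Theorem proposition5p3 (n : nat) (hn : (0 < n)%N) (r : 'I_n -> nat) :
  (lam1 r = lam2 r \/
   exists (w : seq 'I_n) (i : 'I_n),
     lam2 r = subw (lam1 r) (weyl_act_inv w (omega i))) /\
  inP2 (lam_of r) (lam1 r, lam2 r) /\
  (forall mu : weight n * weight n, inP2 (lam_of r) mu ->
     preceq mu (lam1 r, lam2 r)).
Proof.
split; first exact: lam_max_dichotomy.
split; first exact: lam_max_inP2.
move=> [mu1 mu2] /and3P [_ _ /eqP mu_sum] i j le_ij /=.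
apply: min_balanced_split; last by rewrite -hpairB; exact: lam_diff_hpair.
have /and3P [_ _ /eqP lam_sum] := lam_max_inP2 r.
by rewrite -!hpairD mu_sum -lam_sum.
Qed.
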